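(* Let $\phi \colon R \to S$ be a centralizing ring homomorphism and let \[ \mathcal{C}_\phi = \{ q \in \mathcal{C} R \mid \langle \phi D_q\rangle \in \mathscr{E}(S) \} . \] Then $R\mathcal{C}_\phi$ is a subring of $\widetilde R$ containing $R$. The map $\phi$ extends uniquely to a ring homomorphism $\widetilde{\phi} \colon R\mathcal{C}_\phi \to \widetilde S$ which is centralizing. In particular, $\widetilde{\phi}(\mathcal{C}_\phi) \subseteq \mathcal{C} S$.
   Context: $R$ and $S$ are arbitrary rings with $1$. For a ring $R$, $\operatorname{Q} R$ denotes the symmetric ring of quotients of $R$ (it contains $R$ as a subring), and $\mathscr{E}(R)$ denotes the collection of all two-sided ideals of $R$ having zero left and right annihilator in $R$. For $q \in \operatorname{Q} R$, $D_q := \{ r \in R \mid qRr \subseteq R \text{ and } rRq \subseteq R\}$; this is an ideal belonging to $\mathscr{E}(R)$. The extended center is $\mathcal{C} R := \mathcal{Z}(\operatorname{Q} R)$, the center of $\operatorname{Q} R$ (equal to the centralizer of $R$ in $\operatorname{Q} R$), and $\widetilde R := R(\mathcal{C} R) \subseteq \operatorname{Q} R$ is the subring generated by $R$ and $\mathcal{C} R$; similarly $\mathcal{C} S = \mathcal{Z}(\operatorname{Q} S)$ and $\widetilde S = S(\mathcal{C} S)$. A ring homomorphism $\phi \colon R \to S$ is centralizing if $S$ is generated by $\phi(R)$ and the centralizer $C_S(\phi R) = \{ s \in S \mid s\phi(r) = \phi(r)s \ \forall r \in R\}$; for an ideal $I$ of $R$, $\langle \phi I\rangle$ denotes the ideal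 of $S$ generated by $\phi(I)$, which equals $\phi(I)\,C_S(\phi R) = C_S(\phi R)\,\phi(I)$. *)

From HB Require Import structures.
From mathcomp Require Import all_boot all_algebra.
Set Implicit Arguments. Unset Strict Implicit. Unset Printing Implicit Defensive.
Import GRing.Theory.
Local Open Scope ring_scope.

Section Defs.
Variable T : pzRingType.

Definition is_ideal (I : T -> Prop) : Prop :=
  [/\ I 0, (forall x y, I x -> I y -> I (x - y)),
      (forall r x, I x -> I (r * x)) & (forall r x, I x -> I (x * r))].

Definition in_E (I : T -> Prop) : Prop :=
  [/\ is_ideal I,
      (forall x, (forall i, I i -> x * i = 0) -> x = 0) &
      (forall x, (forall i, I i -> i * x = 0) -> x = 0)].

Definition is_subring (P : T -> Prop) : Prop :=
  [/\ P 1, (forall x y, P x -> P y -> P (x - y)) &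
      (forall x y, P x -> P y -> P (x * y))].

Definition subring_gen (G : T -> Prop) (x : T) : Prop :=
  forall P, is_subring P -> (forall y, G y -> P y) -> P x.

Definition ideal_gen (G : T -> Prop) (x : T) : Prop :=
  forall P, is_ideal P -> (forall y, G y -> P y) -> P x.

Definition center (x : T) : Prop := forall y, x * y = y * x.

End Defs.

(* Q is (a model of) the symmetric ring of quotients of R, with R embedded
   via iota.  This is the standard characterization (Beidar-Martindale-
   Mikhalev, Rings with Generalized Identities, Prop. 2.5.3), which
   determines Q up to a unique isomorphism over R. *)
Definition is_sym_quot (R Q : pzRingType) (iota : {rmorphism R -> Q}) : Prop :=
  [/\ injective iota,
      (forall q : Q, exists I : R -> Prop, in_E I /\
          forall i, I i -> (exists r, q * iota i = iota r) /\
                           (exists r, iota i * q = iota r)),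
      (forall (q : Q) (I : R -> Prop), in_E I ->
          (forall i, I i -> q * iota i = 0) -> q = 0),
      (forall (q : Q) (I : R -> Prop), in_E I ->
          (forall i, I i -> iota i * q = 0) -> q = 0) &
      (forall (I : R -> Prop) (f g : R -> R), in_E I ->
          (forall x y, I x -> I y -> f (x + y) = f x + f y) ->
          (forall x y, I x -> I y -> g (x + y) = g x + g y) ->
          (forall x r, I x -> f (x * r) = f x * r) ->
          (forall x r, I x -> g (r * x) = r * g x) ->
          (forall x y, I x -> I y -> x * f y = g x * y) ->
          exists q : Q, forall x, I x ->
            q * iota x = iota (f x) /\ iota x * q = iota (g x))].

Definition Dq (R Q : pzRingType) (iota : {rmorphism R -> Q}) (q : Q) (r : R)
  : Prop :=
  forall s : R, (exists t, q * iota s * iota r = iota t) /\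
                (exists t, iota r * iota s * q = iota t).

(* R~ = subring of Q generated by R and the extended center C R = Z(Q) *)
Definition tilde (R Q : pzRingType) (iota : {rmorphism R -> Q}) : Q -> Prop :=
  subring_gen (fun x => (exists r, x = iota r) \/ center x).

Definition centralizing_on (U V : pzRingType) (A : U -> Prop) (B : V -> Prop)
  (f : U -> V) : Prop :=
  forall y, B y <-> subring_gen
    (fun s => (exists x, A x /\ s = f x) \/
              (B s /\ forall x, A x -> s * f x = f x * s)) y.

Definition centralizing (R S : pzRingType) (phi : {rmorphism R -> S}) : Prop :=
  centralizing_on (fun _ => True) (fun _ => True) phi.

Definition Cphi (R S QR : pzRingType) (iR : {rmorphism R -> QR})
  (phi : {rmorphism R -> S}) (q : QR) : Prop :=
  center q /\ in_E (ideal_gen (fun s => exists r, Dq iR q r /\ s = phi r)).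

Definition RCphi (R S QR : pzRingType) (iR : {rmorphism R -> QR})
  (phi : {rmorphism R -> S}) (x : QR) : Prop :=
  exists l : seq (R * QR), (forall p, p \in l -> Cphi iR phi p.2) /\
    x = \sum_(p <- l) iR p.1 * p.2.

Definition rhom_on (U V : pzRingType) (A : U -> Prop) (B : V -> Prop)
  (f : U -> V) : Prop :=
  [/\ (forall x, A x -> B (f x)), f 1 = 1 &
      (forall x y, A x -> A y -> f (x + y) = f x + f y /\ f (x * y) = f x * f y)].

From HB Require Import structures.
From mathcomp Require Import all_boot all_algebra.
From Stdlib Require Import ClassicalEpsilon.
Import GRing.Theory.
Local Open Scope ring_scope.

Set Implicit Arguments.
Unset Strict Implicit.
Unset Printing Implicit Defensive.

(* For q in C_phi the ideal I = <phi D_q> of S lies in E(S), and "right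
   multiplication by q", sending x in I to the unique y with
   y phi(e) = x phi(q e) for all e in D_q, is a well-defined S-bimodule map
   I -> S: this is where phi being centralizing is used, since S is generated
   by phi(R) and elements commuting with phi(R).  A bimodule map defined on an
   ideal of E(S) is multiplication by a central element q~ of Q S, and
   phi~ (sum r_i q_i) := sum phi(r_i) q_i~.  It is well defined because the
   common denominator ideal of finitely many q_i still generates an ideal of
   E(S), and an element of Q S annihilating such an ideal is zero. *)

Section Generated.
Variable T : pzRingType.
Implicit Types (P G : T -> Prop) (x y : T).

Lemma subring0 P : is_subring P -> P 0.
Proof. by case=> P1 PB _; rewrite -(subrr 1); apply: PB. Qed.

Lemma subringD P x y : is_subring P -> P x -> P y -> P (x + y).
Proof.
move=> sP Px Py; have [_ PB _] := sP.
have -> : x + y = x - (0 - y) by rewrite sub0r opprK.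
by apply: (PB) => //; apply: (PB) => //; exact: subring0.
Qed.

Lemma idealD P x y : is_ideal P -> P x -> P y -> P (x + y).
Proof.
case=> P0 PB _ _ Px Py; have -> : x + y = x - (0 - y) by rewrite sub0r opprK.
by apply: (PB) => //; apply: (PB).
Qed.

Lemma ideal_cap (K : Type) (A : K -> Prop) (Ds : K -> T -> Prop) :
  (forall k, A k -> is_ideal (Ds k)) -> is_ideal (fun x => forall k, A k -> Ds k x).
Proof.
move=> Dideal; split.
- by move=> k /Dideal [].
- by move=> x y Dx Dy k Ak; have [_ DB _ _] := Dideal k Ak; apply: DB; [exact: Dx | exact: Dy].
- by move=> r x Dx k Ak; have [_ _ DMl _] := Dideal k Ak; apply: DMl; exact: Dx.
- by move=> r x Dx k Ak; have [_ _ _ DMr] := Dideal k Ak; apply: DMr; exact: Dx.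
Qed.

Lemma subring_gen_subring G : is_subring (subring_gen G).
Proof.
split.
- by move=> P [].
- by move=> x y Gx Gy P sP GP; have [_ PB _] := sP; apply: PB; [exact: Gx | exact: Gy].
- by move=> x y Gx Gy P sP GP; have [_ _ PM] := sP; apply: PM; [exact: Gx | exact: Gy].
Qed.

Lemma ideal_gen_ideal G : is_ideal (ideal_gen G).
Proof.
split.
- by move=> P [].
- by move=> x y Gx Gy P iP GP; have [_ PB _ _] := iP; apply: PB; [exact: Gx | exact: Gy].
- by move=> r x Gx P iP GP; have [_ _ PMl _] := iP; apply: PMl; exact: Gx.
- by move=> r x Gx P iP GP; have [_ _ _ PMr] := iP; apply: PMr; exact: Gx.
Qed.

Lemma subring_gen_base G x : G x -> subring_gen G x.
Proof. by move=> Gx P _; apply. Qed.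

Lemma ideal_gen_base G x : G x -> ideal_gen G x.
Proof. by move=> Gx P _; apply. Qed.

End Generated.

Section Tilde.
Variables (R Q : pzRingType) (iR : {rmorphism R -> Q}).

Lemma tilde_subring : is_subring (tilde iR).
Proof. exact: subring_gen_subring. Qed.

Lemma tilde_sum (K : eqType) (s : seq K) (r : K -> R) (c : K -> Q) :
  (forall k, k \in s -> center (c k)) -> tilde iR (\sum_(k <- s) iR (r k) * c k).
Proof.
move=> cC; rewrite big_seq; apply: (big_ind (tilde iR)).
- exact: subring0 tilde_subring.
- by move=> x y; apply: subringD tilde_subring.
move=> k sk; have [_ _ TM] := tilde_subring.
by apply: TM; apply: subring_gen_base; [left; exists (r k) | right; exact: cC].
Qed.

End Tilde.

Section Denominators.
Variables (R Q : pzRingType) (iR : {rmorphism R -> Q}).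
Implicit Types (q : Q) (d e s t : R).

Lemma DqMl q s e : Dq iR q e -> Dq iR q (s * e).
Proof.
move=> Dqe u; have [[t1 e1] _] := Dqe (u * s); have [_ [t2 e2]] := Dqe u; split.
  by exists t1; rewrite -e1 !rmorphM !mulrA.
by exists (s * t2); rewrite !rmorphM -e2 !mulrA.
Qed.

Lemma DqMr q s e : Dq iR q e -> Dq iR q (e * s).
Proof.
move=> Dqe u; have [[t1 e1] _] := Dqe u; have [_ [t2 e2]] := Dqe (s * u); split.
  by exists (t1 * s); rewrite !rmorphM -e1 !mulrA.
by exists t2; rewrite -e2 !rmorphM !mulrA.
Qed.

Lemma Dq_ideal q : is_ideal (Dq iR q).
Proof.
split; [| | exact: DqMl | exact: DqMr].
  by move=> u; split; exists 0; rewrite !rmorph0 ?mulr0 ?mul0r.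
move=> d e Dqd Dqe u; have [[t1 e1] [t1' e1']] := Dqd u; have [[t2 e2] [t2' e2']] := Dqe u.
split; [exists (t1 - t2) | exists (t1' - t2')].
  by rewrite !rmorphB mulrBr e1 e2.
by rewrite !rmorphB !mulrBl e1' e2'.
Qed.

Lemma Dq_mulq q e : Dq iR q e -> exists t, q * iR e = iR t.
Proof. by move=> Dqe; have [[t qe] _] := Dqe 1; exists t; rewrite -qe rmorph1 mulr1. Qed.

Lemma Dq1 e : Dq iR 1 e.
Proof. by move=> s; split; [exists (s * e) | exists (e * s)]; rewrite ?mul1r ?mulr1 rmorphM. Qed.

Lemma DqM q1 q2 d e : center q1 -> Dq iR q1 d -> Dq iR q2 e -> Dq iR (q1 * q2) (d * e).
Proof.
move=> cq1 Dd De s; split.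
- have [[t1 e1] _] := Dd s; have [[t2 e2] _] := De t1.
  by exists t2; rewrite -e2 -e1 rmorphM cq1 !mulrA.
- have [_ [t1 e1]] := De s; have [_ [t2 e2]] := Dd t1.
  by exists t2; rewrite -e2 -e1 rmorphM cq1 !mulrA.
Qed.

Lemma center_mulq_iRMl q s e t : center q -> q * iR e = iR t -> q * iR (s * e) = iR (s * t).
Proof. by move=> cq qe; rewrite !rmorphM mulrA cq -mulrA qe. Qed.

Lemma center_mulq_swap q d t e t' : injective iR -> center q ->
  q * iR d = iR t -> q * iR e = iR t' -> t * e = d * t'.
Proof. by move=> iR_inj cq qd qe; apply: iR_inj; rewrite !rmorphM -qd -qe cq mulrA. Qed.

End Denominators.

Section Centralizing.
Variables (R S : pzRingType) (phi : {rmorphism R -> S}).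

Definition phi_ideal (D : R -> Prop) : S -> Prop :=
  ideal_gen (fun s => exists r, D r /\ s = phi r).

Lemma phi_ideal_ideal (D : R -> Prop) : is_ideal (phi_ideal D).
Proof. exact: ideal_gen_ideal. Qed.

Lemma in_E_phi_ideal1 (D : R -> Prop) : D 1 -> in_E (phi_ideal D).
Proof.
move=> D1; have I1 : phi_ideal D 1 by apply: ideal_gen_base; exists 1; rewrite rmorph1.
split; first exact: phi_ideal_ideal.
- by move=> x /(_ _ I1); rewrite mulr1.
- by move=> x /(_ _ I1); rewrite mul1r.
Qed.

Hypothesis phi_cent : centralizing phi.

Lemma centralizing_ind (P : S -> Prop) : is_subring P -> (forall r, P (phi r)) ->
  (forall c, (forall r, c * phi r = phi r * c) -> P c) -> forall s, P s.
Proof.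
move=> sP Pphi Pc s; have [gen _] := phi_cent s.
apply: (gen I) => // y [[r [_ ->]] | [_ cy]]; first exact: Pphi.
by apply: Pc => r; exact: cy.
Qed.

Section Annihilators.
Variables (T : pzRingType) (j : {rmorphism S -> T}) (D : R -> Prop).
Hypothesis D_ideal : is_ideal D.

Lemma phi_ideal_lann w : (forall e, D e -> w * j (phi e) = 0) ->
  forall x, phi_ideal D x -> w * j x = 0.
Proof.
have [_ _ DMl _] := D_ideal.
pose lann w := forall e, D e -> w * j (phi e) = 0.
(* S is generated by phi R and the centralizer, so the left annihilator of
   phi D is stable under right multiplication by S. *)
have lannMr : forall s u, lann u -> lann (u * j s).
  apply: (centralizing_ind (P := fun s => forall u, lann u -> lann (u * j s))).
  - split.
    + by move=> u lu e De; rewrite rmorph1 mulr1; exact: lu.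
    + by move=> a b la lb u lu e De; rewrite rmorphB mulrBr mulrBl la // lb // subrr.
    + by move=> a b la lb u lu; rewrite rmorphM mulrA; apply: lb; exact: la.
  - by move=> r u lu e De; rewrite -mulrA -!rmorphM; apply: lu; exact: DMl.
  - by move=> c cc u lu e De; rewrite -mulrA -rmorphM cc rmorphM mulrA lu // mul0r.
move=> lw x Ix; apply: (Ix (fun x => forall u, lann u -> u * j x = 0)) => //; last first.
  by move=> _ [e [De ->]] u lu; exact: lu.
split.
- by move=> u _; rewrite rmorph0 mulr0.
- by move=> a b la lb u lu; rewrite rmorphB mulrBr la // lb // subrr.
- by move=> r a la u lu; rewrite rmorphM mulrA; apply: la; exact: lannMr.
- by move=> r a la u lu; rewrite rmorphM mulrA la // mul0r.
Qed.

Lemma phi_ideal_rann w : (forall e, D e -> j (phi e) * w = 0) ->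
  forall x, phi_ideal D x -> j x * w = 0.
Proof.
have [_ _ _ DMr] := D_ideal.
pose rann w := forall e, D e -> j (phi e) * w = 0.
have rannMl : forall s u, rann u -> rann (j s * u).
  apply: (centralizing_ind (P := fun s => forall u, rann u -> rann (j s * u))).
  - split.
    + by move=> u ru e De; rewrite rmorph1 mul1r; exact: ru.
    + by move=> a b ra rb u ru e De; rewrite rmorphB mulrBl mulrBr ra // rb // subrr.
    + by move=> a b ra rb u ru; rewrite rmorphM -mulrA; apply: ra; exact: rb.
  - by move=> r u ru e De; rewrite mulrA -!rmorphM; apply: ru; exact: DMr.
  - by move=> c cc u ru e De; rewrite mulrA -rmorphM -cc rmorphM -mulrA ru // mulr0.
move=> rw x Ix; apply: (Ix (fun x => forall u, rann u -> j x * u = 0)) => //; last first.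
  by move=> _ [e [De ->]] u ru; exact: ru.
split.
- by move=> u _; rewrite rmorph0 mul0r.
- by move=> a b ra rb u ru; rewrite rmorphB mulrBl ra // rb // subrr.
- by move=> r a ra u ru; rewrite rmorphM -mulrA ra // mulr0.
- by move=> r a ra u ru; rewrite rmorphM -mulrA; apply: ra; exact: rannMl.
Qed.

End Annihilators.

Lemma in_E_phi_idealM (D1 D2 D : R -> Prop) : is_ideal D1 -> is_ideal D2 ->
  (forall a b, D1 a -> D2 b -> D (a * b)) ->
  in_E (phi_ideal D1) -> in_E (phi_ideal D2) -> in_E (phi_ideal D).
Proof.
move=> D1_ideal D2_ideal D12 [_ lann1 rann1] [_ lann2 rann2].
have phiD a b : D1 a -> D2 b -> phi_ideal D (phi a * phi b).
  by move=> D1a D2b; apply: ideal_gen_base; exists (a * b); rewrite rmorphM; split=> //; exact: D12.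
split; first exact: phi_ideal_ideal.
- move=> x Dx; apply: lann1 => i I1i; rewrite -[i]/(idfun i).
  apply: (phi_ideal_lann (j := idfun) D1_ideal _ I1i) => a D1a.
  apply: lann2 => k I2k; rewrite -[k]/(idfun k).
  apply: (phi_ideal_lann (j := idfun) D2_ideal _ I2k) => b D2b /=.
  by rewrite -mulrA; apply: Dx; exact: phiD.
- move=> x Dx; apply: rann2 => i I2i; rewrite -[i]/(idfun i).
  apply: (phi_ideal_rann (j := idfun) D2_ideal _ I2i) => b D2b.
  apply: rann1 => k I1k; rewrite -[k]/(idfun k).
  apply: (phi_ideal_rann (j := idfun) D1_ideal _ I1k) => a D1a /=.
  by rewrite mulrA; apply: Dx; exact: phiD.
Qed.

End Centralizing.

Section SymmetricQuotients.
Variables (S QS : pzRingType) (iS : {rmorphism S -> QS}).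
Hypothesis hS : is_sym_quot iS.

Lemma sym_quot_center (I : S -> Prop) (F : S -> S) (w : QS) : in_E I ->
  (forall r x, I x -> F (r * x) = r * F x) ->
  (forall x, I x -> w * iS x = iS (F x)) -> center w.
Proof.
move=> EI FMl wF v; have [_ denom lann _ _] := hS; have [[_ _ IMl _] _ _] := EI.
have [J [EJ vJ]] := denom v.
apply/eqP; rewrite -subr_eq0; apply/eqP; apply: (lann _ J EJ) => j Jj.
apply: (lann _ I EI) => x Ix; have [[s vj] _] := vJ j Jj.
have wvjx : w * v * iS j * iS x = iS (s * F x).
  by rewrite -(mulrA w v) vj -mulrA -rmorphM wF ?FMl //; exact: IMl.
have vwjx : v * w * iS j * iS x = iS (s * F x).
  by rewrite -!mulrA -rmorphM wF ?FMl ?rmorphM ?mulrA ?vj -?rmorphM //; exact: IMl.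
by rewrite !mulrBl wvjx vwjx subrr.
Qed.

Lemma sym_quot_bimodule (I : S -> Prop) (F : S -> S) : in_E I ->
  (forall x y, I x -> I y -> F (x + y) = F x + F y) ->
  (forall r x, I x -> F (x * r) = F x * r) ->
  (forall r x, I x -> F (r * x) = r * F x) ->
  exists w, center w /\ forall x, I x -> w * iS x = iS (F x).
Proof.
move=> EI FD FMr FMl; have [_ _ _ _ ext] := hS.
have [w wF] := ext I F F EI FD FD (fun x r Ix => FMr r x Ix) (fun x r Ix => FMl r x Ix)
  (fun x y Ix Iy => etrans (esym (FMl x y Iy)) (FMr y x Ix)).
have wFl x : I x -> w * iS x = iS (F x) by case/wF.
by exists w; split=> //; exact: sym_quot_center EI FMl wFl.
Qed.

End SymmetricQuotients.

Section Extension.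
Variables (R S QR QS : pzRingType).
Variables (iR : {rmorphism R -> QR}) (iS : {rmorphism S -> QS}) (phi : {rmorphism R -> S}).
Hypotheses (hR : is_sym_quot iR) (hS : is_sym_quot iS) (phi_cent : centralizing phi).

Let iR_inj : injective iR. Proof. by case: hR. Qed.

Lemma phi_ideal_eq (D : R -> Prop) (w1 w2 : QS) :
  is_ideal D -> in_E (phi_ideal phi D) ->
  (forall e, D e -> w1 * iS (phi e) = w2 * iS (phi e)) -> w1 = w2.
Proof.
move=> D_ideal ED w12; have [_ _ lann _ _] := hS.
apply/eqP; rewrite -subr_eq0; apply/eqP; apply: (lann _ _ ED).
by apply: (phi_ideal_lann phi_cent (j := iS) D_ideal) => e De; rewrite mulrBl w12 ?subrr.
Qed.

(* [qmul_rel q x y]: y stands for "x q", i.e. y e = x (q e) for e in D_q. *)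
Definition qmul_rel (q : QR) (x y : S) :=
  forall e t, Dq iR q e -> q * iR e = iR t -> y * phi e = x * phi t.

Definition phiC_spec (q : QR) (w : QS) := center w /\
  forall e t, Dq iR q e -> q * iR e = iR t -> w * iS (phi e) = iS (phi t).

Section CentralElement.
Variable q : QR.
Hypothesis Cq : Cphi iR phi q.

Lemma qmul_rel_uniq x y1 y2 : qmul_rel q x y1 -> qmul_rel q x y2 -> y1 = y2.
Proof.
move=> xy1 xy2; have [_ [_ lann _]] := Cq.
apply/eqP; rewrite -subr_eq0; apply/eqP; apply: lann => i Ii; rewrite -[i]/(idfun i).
apply: (phi_ideal_lann phi_cent (j := idfun) (Dq_ideal iR q) _ Ii) => e De.
by have [t qe] := Dq_mulq De; rewrite /= mulrBl (xy1 _ _ De qe) (xy2 _ _ De qe) subrr.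
Qed.

Lemma qmul_relD x1 y1 x2 y2 :
  qmul_rel q x1 y1 -> qmul_rel q x2 y2 -> qmul_rel q (x1 + x2) (y1 + y2).
Proof. by move=> h1 h2 e t De qe; rewrite !mulrDl (h1 _ _ De qe) (h2 _ _ De qe). Qed.

Lemma qmul_relB x1 y1 x2 y2 :
  qmul_rel q x1 y1 -> qmul_rel q x2 y2 -> qmul_rel q (x1 - x2) (y1 - y2).
Proof. by move=> h1 h2 e t De qe; rewrite !mulrBl (h1 _ _ De qe) (h2 _ _ De qe). Qed.

Lemma qmul_relMl r x y : qmul_rel q x y -> qmul_rel q (r * x) (r * y).
Proof. by move=> h e t De qe; rewrite -!mulrA (h _ _ De qe). Qed.

Lemma qmul_relMr r x y : qmul_rel q x y -> qmul_rel q (x * r) (y * r).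
Proof.
have [cq _] := Cq; move: x y.
apply: (centralizing_ind phi_cent
  (P := fun r => forall x y, qmul_rel q x y -> qmul_rel q (x * r) (y * r))).
- split.
  + by move=> x y; rewrite !mulr1.
  + by move=> a b ha hb x y h; rewrite !mulrBr; apply: qmul_relB; [exact: ha | exact: hb].
  + by move=> a b ha hb x y h; rewrite !mulrA; apply: hb; exact: ha.
- move=> s x y h e t De qe.
  by rewrite -mulrA -rmorphM (h _ _ (DqMl s De) (center_mulq_iRMl s cq qe)) rmorphM mulrA.
- by move=> c cc x y h e t De qe; rewrite -mulrA cc mulrA (h _ _ De qe) -mulrA -cc mulrA.
Qed.

Lemma qmul_rel_phi d t : q * iR d = iR t -> qmul_rel q (phi d) (phi t).
Proof.
by have [cq _] := Cq; move=> qd e t' _ qe; rewrite -!rmorphM (center_mulq_swap iR_inj cq qd qe).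
Qed.

Lemma qmul_rel_total x : phi_ideal phi (Dq iR q) x -> exists y, qmul_rel q x y.
Proof.
move=> Ix; apply: (Ix (fun x => exists y, qmul_rel q x y)); last first.
  by move=> _ [d [Dd ->]]; have [t qd] := Dq_mulq Dd; exists (phi t); exact: qmul_rel_phi.
split.
- by exists 0 => e t _ _; rewrite !mul0r.
- by move=> a b [y1 h1] [y2 h2]; exists (y1 - y2); exact: qmul_relB.
- by move=> r a [y h]; exists (r * y); exact: qmul_relMl.
- by move=> r a [y h]; exists (y * r); exact: qmul_relMr.
Qed.

Lemma phiC_exists : exists w, phiC_spec q w.
Proof.
set I := phi_ideal phi (Dq iR q).
pose F x := epsilon (inhabits 0) (qmul_rel q x).
have FP x : I x -> qmul_rel q x (F x) by move/qmul_rel_total; exact: epsilon_spec.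
have FE x y : I x -> qmul_rel q x y -> F x = y by move/FP; exact: qmul_rel_uniq.
have [_ _ IMl IMr] := phi_ideal_ideal phi (Dq iR q).
have FD x y : I x -> I y -> F (x + y) = F x + F y.
  move=> Ix Iy; apply: FE; first exact: idealD (phi_ideal_ideal _ _) Ix Iy.
  by apply: qmul_relD; exact: FP.
have FMr r x : I x -> F (x * r) = F x * r.
  by move=> Ix; apply: FE; [exact: IMr | apply: qmul_relMr; exact: FP].
have FMl r x : I x -> F (r * x) = r * F x.
  by move=> Ix; apply: FE; [exact: IMl | apply: qmul_relMl; exact: FP].
have [w [cw wF]] := sym_quot_bimodule hS Cq.2 FD FMr FMl.
exists w; split=> // e t De qe.
have Ie : I (phi e) by apply: ideal_gen_base; exists e.
by rewrite wF // (FE _ _ Ie (qmul_rel_phi qe)).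
Qed.

End CentralElement.

Definition phiC (q : QR) : QS := epsilon (inhabits 0) (phiC_spec q).

Lemma phiC_specP q : Cphi iR phi q -> phiC_spec q (phiC q).
Proof. by move=> Cq; apply: epsilon_spec; exact: phiC_exists. Qed.

Lemma phiC_center q : Cphi iR phi q -> center (phiC q).
Proof. by case/phiC_specP. Qed.

Lemma phiC_phi q e t : Cphi iR phi q -> Dq iR q e -> q * iR e = iR t ->
  phiC q * iS (phi e) = iS (phi t).
Proof. by case/phiC_specP=> _; apply. Qed.

Lemma Cphi1 : Cphi iR phi 1.
Proof.
split; first by move=> y; rewrite mul1r mulr1.
by apply: in_E_phi_ideal1; exact: Dq1.
Qed.

Lemma phiC1 : phiC 1 = 1.
Proof.
have := phiC_phi Cphi1 (Dq1 iR 1) (mul1r _).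
by rewrite !rmorph1 !mulr1.
Qed.

Lemma Cphi_mul q1 q2 : Cphi iR phi q1 -> Cphi iR phi q2 -> Cphi iR phi (q1 * q2).
Proof.
move=> [cq1 E1] [cq2 E2]; split.
  by move=> y; rewrite -mulrA cq2 mulrA cq1 mulrA.
apply: (in_E_phi_idealM phi_cent (Dq_ideal iR q1) (Dq_ideal iR q2) _ E1 E2).
by move=> d e; exact: DqM.
Qed.

Lemma phiC_mul q1 q2 : Cphi iR phi q1 -> Cphi iR phi q2 ->
  phiC (q1 * q2) = phiC q1 * phiC q2.
Proof.
move=> C1 C2; have C12 := Cphi_mul C1 C2.
apply: (phi_ideal_eq (Dq_ideal iR q1) C1.2) => d Dd.
apply: (phi_ideal_eq (Dq_ideal iR q2) C2.2) => e De.
have [td qd] := Dq_mulq Dd; have [te qe] := Dq_mulq De.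
have qde : q1 * q2 * iR (d * e) = iR (td * te).
  by rewrite !rmorphM -qd -qe !mulrA -(mulrA q1 q2) C2.1 mulrA.
have phiCde : phiC q1 * phiC q2 * iS (phi (d * e)) = iS (phi (td * te)).
  rewrite !rmorphM !mulrA -(mulrA (phiC q1)) (phiC_center C2) mulrA (phiC_phi C1 Dd qd).
  by rewrite -mulrA (phiC_phi C2 De qe).
by rewrite -!mulrA -!rmorphM (phiC_phi C12 (DqM C1.1 Dd De) qde) -phiCde !rmorphM !mulrA.
Qed.

Implicit Types (l : seq (R * QR)).

Definition Cphi_seq l := forall p, p \in l -> Cphi iR phi p.2.
Definition Dq_seq l (d : R) := forall p, p \in l -> Dq iR p.2 d.
Definition sumQR l := \sum_(p <- l) iR p.1 * p.2.
Definition sumQS l := \sum_(p <- l) iS (phi p.1) * phiC p.2.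

Lemma Cphi_seq_cons p l : Cphi_seq (p :: l) -> Cphi iR phi p.2 /\ Cphi_seq l.
Proof. by move=> Cpl; split=> [|p' lp']; apply: Cpl; rewrite inE ?eqxx ?lp' ?orbT. Qed.

Lemma Cphi_seq_cat l1 l2 : Cphi_seq l1 -> Cphi_seq l2 -> Cphi_seq (l1 ++ l2).
Proof. by move=> C1 C2 p; rewrite mem_cat => /orP [/C1 | /C2]. Qed.

Lemma Cphi_seq1 r q : Cphi iR phi q -> Cphi_seq [:: (r, q)].
Proof. by move=> Cq p; rewrite inE => /eqP ->. Qed.

Lemma Dq_seq_ideal l : is_ideal (Dq_seq l).
Proof. by apply: (ideal_cap (Ds := fun p => Dq iR p.2)) => p _; exact: Dq_ideal. Qed.

Lemma in_E_Dq_seq l : Cphi_seq l -> in_E (phi_ideal phi (Dq_seq l)).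
Proof.
elim: l => [_ | p l IH /Cphi_seq_cons [Cp Cl]].
  by apply: in_E_phi_ideal1 => p; rewrite in_nil.
apply: (in_E_phi_idealM phi_cent (Dq_ideal iR p.2) (Dq_seq_ideal l) _ Cp.2 (IH Cl)).
move=> d e Dd De p'; rewrite inE => /predU1P [-> | /De]; [exact: DqMr | exact: DqMl].
Qed.

Lemma sumQ_mulDq l d : Cphi_seq l -> Dq_seq l d ->
  exists u, sumQR l * iR d = iR u /\ sumQS l * iS (phi d) = iS (phi u).
Proof.
move=> Cl Dd; rewrite /sumQR /sumQS !big_seq !mulr_suml.
apply: (big_ind2 (fun a b => exists u, a = iR u /\ b = iS (phi u))).
- by exists 0; rewrite !rmorph0.
- by move=> _ _ _ _ [u1 [-> ->]] [u2 [-> ->]]; exists (u1 + u2); rewrite !rmorphD.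
move=> p lp; have Dpd := Dd p lp; have [t qt] := Dq_mulq Dpd.
by exists (p.1 * t); rewrite !rmorphM -!mulrA qt (phiC_phi (Cl p lp) Dpd qt).
Qed.

Lemma sumQS_wd l1 l2 : Cphi_seq l1 -> Cphi_seq l2 ->
  sumQR l1 = sumQR l2 -> sumQS l1 = sumQS l2.
Proof.
move=> C1 C2 e12.
apply: (phi_ideal_eq (Dq_seq_ideal (l1 ++ l2)) (in_E_Dq_seq (Cphi_seq_cat C1 C2))) => d Dd.
have Dd1 : Dq_seq l1 d by move=> p lp; apply: Dd; rewrite mem_cat lp.
have Dd2 : Dq_seq l2 d by move=> p lp; apply: Dd; rewrite mem_cat lp orbT.
have [u1 [eR1 ->]] := sumQ_mulDq C1 Dd1; have [u2 [eR2 ->]] := sumQ_mulDq C2 Dd2.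
by have -> : u1 = u2 by apply: iR_inj; rewrite -eR1 -eR2 e12.
Qed.

Definition phiT (x : QR) : QS :=
  epsilon (inhabits 0) (fun y => exists l, [/\ Cphi_seq l, x = sumQR l & y = sumQS l]).

Lemma phiT_sum l : Cphi_seq l -> phiT (sumQR l) = sumQS l.
Proof.
move=> Cl; rewrite /phiT; set P := fun y => _.
have [l' [Cl' el' ->]] : P (epsilon (inhabits 0) P) by apply: epsilon_spec; exists (sumQS l), l.
exact: sumQS_wd Cl' Cl (esym el').
Qed.

Lemma sumQR_cat l1 l2 : sumQR (l1 ++ l2) = sumQR l1 + sumQR l2.
Proof. exact: big_cat. Qed.

Lemma sumQS_cat l1 l2 : sumQS (l1 ++ l2) = sumQS l1 + sumQS l2.
Proof. exact: big_cat. Qed.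

Lemma sumQR1 r q : sumQR [:: (r, q)] = iR r * q.
Proof. exact: big_seq1. Qed.

Lemma sumQS1 r q : sumQS [:: (r, q)] = iS (phi r) * phiC q.
Proof. exact: big_seq1. Qed.

Lemma phiT_mulq r q : Cphi iR phi q -> phiT (iR r * q) = iS (phi r) * phiC q.
Proof. by move=> Cq; rewrite -sumQR1 phiT_sum ?sumQS1 //; exact: Cphi_seq1. Qed.

Lemma phiT_iR r : phiT (iR r) = iS (phi r).
Proof. by have := phiT_mulq r Cphi1; rewrite phiC1 !mulr1. Qed.

Lemma phiT_Cphi q : Cphi iR phi q -> phiT q = phiC q.
Proof. by move=> Cq; have := phiT_mulq 1 Cq; rewrite !rmorph1 !mul1r. Qed.

Lemma RCphi_sum l : Cphi_seq l -> RCphi iR phi (sumQR l).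
Proof. by exists l. Qed.

Lemma RCphi_mulq r q : Cphi iR phi q -> RCphi iR phi (iR r * q).
Proof. by move=> Cq; rewrite -sumQR1; apply: RCphi_sum; exact: Cphi_seq1. Qed.

Lemma RCphi_iR r : RCphi iR phi (iR r).
Proof. by have := RCphi_mulq r Cphi1; rewrite mulr1. Qed.

Lemma RCphi_Cphi q : Cphi iR phi q -> RCphi iR phi q.
Proof. by move=> Cq; have := RCphi_mulq 1 Cq; rewrite rmorph1 mul1r. Qed.

Definition seq_opp l := [seq (- p.1, p.2) | p <- l].
Definition seq_mul l1 l2 := [seq (p1.1 * p2.1, p1.2 * p2.2) | p1 <- l1, p2 <- l2].

Lemma Cphi_seq_opp l : Cphi_seq l -> Cphi_seq (seq_opp l).
Proof. by rewrite /seq_opp => Cl _ /mapP [p /Cl Cp ->]. Qed.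

Lemma sumQR_opp l : sumQR (seq_opp l) = - sumQR l.
Proof. by rewrite /sumQR big_map -sumrN; apply: eq_bigr => p _; rewrite rmorphN mulNr. Qed.

Lemma Cphi_seq_mul l1 l2 : Cphi_seq l1 -> Cphi_seq l2 -> Cphi_seq (seq_mul l1 l2).
Proof.
by rewrite /seq_mul => C1 C2 _ /allpairsP [[p1 p2] [/C1 Cp1 /C2 Cp2 ->]]; exact: Cphi_mul.
Qed.

Lemma sumQR_mul l1 l2 : Cphi_seq l1 -> sumQR (seq_mul l1 l2) = sumQR l1 * sumQR l2.
Proof.
move=> C1; rewrite /sumQR big_allpairs_dep mulr_suml; apply: eq_big_seq => p1 lp1.
rewrite mulr_sumr; apply: eq_bigr => p2 _ /=.
by rewrite rmorphM -!mulrA; congr (_ * _); rewrite !mulrA (C1 p1 lp1).1.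
Qed.

Lemma sumQS_mul l1 l2 : Cphi_seq l1 -> Cphi_seq l2 ->
  sumQS (seq_mul l1 l2) = sumQS l1 * sumQS l2.
Proof.
move=> C1 C2; rewrite /sumQS big_allpairs_dep mulr_suml; apply: eq_big_seq => p1 lp1.
rewrite mulr_sumr; apply: eq_big_seq => p2 lp2 /=.
rewrite (phiC_mul (C1 p1 lp1) (C2 p2 lp2)) !rmorphM -!mulrA; congr (_ * _).
by rewrite !mulrA (phiC_center (C1 p1 lp1)).
Qed.

Lemma RCphi_subring : is_subring (RCphi iR phi).
Proof.
split; first by rewrite -(rmorph1 iR); exact: RCphi_iR.
- move=> _ _ [l1 [C1 ->]] [l2 [C2 ->]].
  rewrite -/(sumQR l1) -/(sumQR l2) -sumQR_opp -sumQR_cat.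
  by apply: RCphi_sum; apply: Cphi_seq_cat => //; exact: Cphi_seq_opp.
- move=> _ _ [l1 [C1 ->]] [l2 [C2 ->]].
  rewrite -/(sumQR l1) -/(sumQR l2) -sumQR_mul //.
  by apply: RCphi_sum; exact: Cphi_seq_mul.
Qed.

Lemma RCphi_tilde x : RCphi iR phi x -> tilde iR x.
Proof. by move=> [l [Cl ->]]; apply: tilde_sum => p /Cl []. Qed.

Lemma phiT_tilde x : RCphi iR phi x -> tilde iS (phiT x).
Proof.
move=> [l [Cl ->]]; rewrite phiT_sum //.
by apply: tilde_sum => p /Cl; exact: phiC_center.
Qed.

Lemma phiT_rhom : rhom_on (RCphi iR phi) (tilde iS) phiT.
Proof.
split; [exact: phiT_tilde | by rewrite -(rmorph1 iR) phiT_iR !rmorph1 |].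
move=> _ _ [l1 [C1 ->]] [l2 [C2 ->]]; rewrite -/(sumQR l1) -/(sumQR l2); split.
  by rewrite -sumQR_cat !phiT_sum ?sumQS_cat //; exact: Cphi_seq_cat.
by rewrite -sumQR_mul // !phiT_sum ?sumQS_mul //; exact: Cphi_seq_mul.
Qed.

Lemma phiT_unique g : rhom_on (RCphi iR phi) (tilde iS) g ->
  (forall r, g (iR r) = iS (phi r)) -> forall x, RCphi iR phi x -> g x = phiT x.
Proof.
move=> [_ _ gDM] g_iR _ [l [Cl ->]]; rewrite -/(sumQR l) phiT_sum //.
have gC q : Cphi iR phi q -> g q = phiC q.
  move=> Cq; apply: (phi_ideal_eq (Dq_ideal iR q) Cq.2) => d Dd.
  have [t qd] := Dq_mulq Dd.
  by rewrite (phiC_phi Cq Dd qd) -!g_iR -(gDM _ _ (RCphi_Cphi Cq) (RCphi_iR d)).2 qd.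
suff [] : RCphi iR phi (sumQR l) /\ g (sumQR l) = sumQS l by [].
rewrite /sumQR /sumQS !big_seq.
apply: (big_ind2 (fun x y => RCphi iR phi x /\ g x = y)).
- by split; [exact: subring0 RCphi_subring | rewrite -(rmorph0 iR) g_iR !rmorph0].
- move=> x1 y1 x2 y2 [RCx1 <-] [RCx2 <-]; split; last exact: (gDM _ _ RCx1 RCx2).1.
  exact: subringD RCphi_subring RCx1 RCx2.
move=> p lp; have Cp := Cl p lp; split; first exact: RCphi_mulq.
by rewrite (gDM _ _ (RCphi_iR _) (RCphi_Cphi Cp)).2 g_iR gC.
Qed.

Definition phiT_gen (y : QS) := (exists x, RCphi iR phi x /\ y = phiT x) \/
  (tilde iS y /\ forall x, RCphi iR phi x -> y * phiT x = phiT x * y).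

Lemma phiT_gen_iS s : subring_gen phiT_gen (iS s).
Proof.
have [G1 GB GM] := subring_gen_subring phiT_gen.
apply: (centralizing_ind phi_cent (P := fun s => subring_gen phiT_gen (iS s))).
- split; [by rewrite rmorph1 | by move=> a b Ga Gb; rewrite rmorphB; exact: GB |].
  by move=> a b Ga Gb; rewrite rmorphM; exact: GM.
- move=> r; apply: subring_gen_base; left; exists (iR r).
  by rewrite phiT_iR; split=> //; exact: RCphi_iR.
move=> c cc; apply: subring_gen_base; right; split.
  by apply: subring_gen_base; left; exists c.
move=> _ [l [Cl ->]]; rewrite -/(sumQR l) phiT_sum // /sumQS mulr_sumr mulr_suml.
apply: eq_big_seq => p lp.
by rewrite mulrA -rmorphM cc rmorphM -!mulrA (phiC_center (Cl p lp)).
Qed.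

Lemma phiT_centralizing : centralizing_on (RCphi iR phi) (tilde iS) phiT.
Proof.
move=> y; change (tilde iS y <-> subring_gen phiT_gen y); split=> [Ty | Gy].
  apply: Ty => [|z [[s ->] | cz]]; first exact: subring_gen_subring.
    exact: phiT_gen_iS.
  apply: subring_gen_base; right; split=> [|x _]; last exact: cz.
  by apply: subring_gen_base; right.
apply: Gy => [|z [[x [RCx ->]] | [Tz _]]] //; first exact: tilde_subring.
exact: phiT_tilde.
Qed.

End Extension.

Theorem lemma1p1 (R S QR QS : pzRingType)
  (iR : {rmorphism R -> QR}) (iS : {rmorphism S -> QS})
  (phi : {rmorphism R -> S}) :
  is_sym_quot iR -> is_sym_quot iS -> centralizing phi ->
  (* R C_phi is a subring of R~ containing R *)
  (is_subring (RCphi iR phi) /\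
   (forall x, RCphi iR phi x -> tilde iR x) /\
   (forall r, RCphi iR phi (iR r))) /\
  (* phi extends uniquely to a ring hom  R C_phi -> S~ , which is centralizing,
     and maps C_phi into C S *)
  (exists f : QR -> QS,
     [/\ rhom_on (RCphi iR phi) (tilde iS) f,
         (forall r, f (iR r) = iS (phi r)),
         (forall g : QR -> QS, rhom_on (RCphi iR phi) (tilde iS) g ->
            (forall r, g (iR r) = iS (phi r)) ->
            forall x, RCphi iR phi x -> g x = f x),
         centralizing_on (RCphi iR phi) (tilde iS) f &
         (forall q, Cphi iR phi q -> center (f q))]).
Proof.
move=> hR hS phi_cent.
split; first by split; [exact: RCphi_subring | split; [exact: RCphi_tilde | exact: RCphi_iR]].
exists (phiT iR iS phi); split.
- exact: phiT_rhom.
- exact: phiT_iR.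
- exact: phiT_unique.
- exact: phiT_centralizing.
- by move=> q Cq; rewrite phiT_Cphi //; exact: phiC_center.
Qed.
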